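(* For every $\gamma\in[0,1]$, the Equal Filling Till Threshold (EFTT) algorithm with threshold $\gamma$ (described in the context) is $(1-e^{-\gamma})$-CEF, i.e., on every instance the fractional matching $X$ it outputs satisfies $V_i(X)\ge (1-e^{-\gamma})\,V_i^*(y_j(X))$ for all classes $i,j$.
   Context: Online class matching (divisible setting): an instance is a bipartite graph $G=(N,M,E)$ with known agents $N$, items $M$, $E\subseteq M\times N$ ($a$ likes $o$ iff $(o,a)\in E$); agents are partitioned into $k$ known classes $N_1,\dots,N_k$. Items arrive one at a time in adversarial order; upon arrival of $o$ its set of liking agents is revealed and fractions of $o$ must be irrevocably assigned to agents liking it. A fractional matching is $X=(x_{o,a})\in[0,1]^{M\times N}$ supported on $E$ with $\sum_a x_{o,a}\le1$ for each item and $\sum_o x_{o,a}\le 1$ for each agent; the degree of an agent is $\sum_o x_{o,a}$; saturated means degree $1$. $V_i(X)=\sum_{a\in N_i}\sum_o x_{o,a}$. For class $j$, $y_j(X)\in[0,1]^M$ has $y_j(X)_o=\sum_{a\in N_j}x_{o,a}$. For $y\in[0,1]^M$, $V_i^*(y)$ is the maximum size of a fractional matching using edges of $E$ between $N_i$ and $M$ with degree at most $y_o$ at each item $o$ and at most $1$ at each agent. EFTT with threshold $\gamma$: the matching is increased continuously (water-filling). Upon arrival of item $o$: Phase I: let $Z_\gamma$ be the set of classes containing at least one agent that likes $o$ and has current degree less than $\gamma$. While $Z_\gamma\neq\emptyset$ and $o$ is not fully assigned, continuously assign mass of $o$, splitting it equally among the classes in $Z_\gamma$; within each class $i\in Z_\gamma$,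 the mass goes to the agent(s) of class $i$ liking $o$ with minimum current degree; a class is removed from $Z_\gamma$ once it no longer has an agent liking $o$ with degree less than $\gamma$. Phase II: once $Z_\gamma=\emptyset$, continuously assign the remaining mass of $o$ to the unsaturated agent(s) liking $o$ with smallest current degree, regardless of class, until $o$ is fully assigned or all agents liking $o$ are saturated. *)

From HB Require Import structures.
From mathcomp Require Import all_boot all_order all_algebra.
From mathcomp Require Import all_classical all_reals all_analysis.
Set Implicit Arguments. Unset Strict Implicit. Unset Printing Implicit Defensive.
Import Order.TTheory GRing.Theory Num.Theory.
Local Open Scope ring_scope.
Local Open Scope classical_set_scope.

(* Conventions:
   - agents: a finite type N; items: 'I_m, arriving in the order 0,1,...,m-1
     (every adversarial arrival order is obtained by relabelling items);
   - E o a : agent a likes item o;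
   - cls a : the class (in 'I_k) of agent a;
   - a (fractional) assignment is X : 'I_m -> N -> R, X o a = x_{o,a}. *)

Section EFTT.
Context {R : realType} {N : finType} {m k : nat}.

Definition waterfill (S : pred N) (d : N -> R) (cap amt : R) (p : N -> R) : Prop :=
  exists L : R, L <= cap /\
    (forall a, p a = if S a then Num.max 0 (L - d a) else 0) /\
    \sum_(a | S a) p a = amt.

(* Amount class i can absorb in Phase I before all its agents liking the
   item reach degree gamma (positive iff i is in Z_gamma). *)
Definition class_cap (gamma : R) (likes : pred N) (cls : N -> 'I_k)
    (deg : N -> R) (i : 'I_k) : R :=
  \sum_(a | likes a && (cls a == i)) Num.max 0 (gamma - deg a).

Definition eftt_item (gamma : R) (likes : pred N) (cls : N -> 'I_k)
    (deg : N -> R) (x : N -> R) : Prop :=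
  exists (q : 'I_k -> R) (s : R) (pc : 'I_k -> N -> R) (p2 : N -> R),
    (* Phase I: equal split among active classes, classes dropping out when
       saturated at gamma: class i gets min(cap_i, s) *)
    0 <= s /\
    (forall i, q i = Num.min (class_cap gamma likes cls deg i) s) /\
    \sum_i q i = Num.min 1 (\sum_i class_cap gamma likes cls deg i) /\
    (forall i, waterfill [pred a | likes a && (cls a == i)] deg gamma (q i) (pc i)) /\
    (* Phase II: remaining mass water-filled over all agents liking the item,
       up to saturation *)
    (let p1 := fun a => pc (cls a) a in
     let deg1 := fun a => deg a + p1 a in
     waterfill likes deg1 1
       (Num.min (1 - \sum_i q i) (\sum_(a | likes a) (1 - deg1 a))) p2 /\
     forall a, x a = p1 a + p2 a).

Definition deg_before (X : 'I_m -> N -> R) (o : 'I_m) (a : N) : R :=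
  \sum_(o' : 'I_m | (o' < o)%N) X o' a.

Definition eftt_output (gamma : R) (E : 'I_m -> N -> bool) (cls : N -> 'I_k)
    (X : 'I_m -> N -> R) : Prop :=
  forall o : 'I_m, eftt_item gamma (E o) cls (deg_before X o) (X o).

Definition V (cls : N -> 'I_k) (X : 'I_m -> N -> R) (i : 'I_k) : R :=
  \sum_(a | cls a == i) \sum_(o : 'I_m) X o a.

Definition yv (cls : N -> 'I_k) (X : 'I_m -> N -> R) (j : 'I_k) (o : 'I_m) : R :=
  \sum_(a | cls a == j) X o a.

Definition feasible_i (E : 'I_m -> N -> bool) (cls : N -> 'I_k) (i : 'I_k)
    (y : 'I_m -> R) (Y : 'I_m -> N -> R) : Prop :=
  (forall o a, 0 <= Y o a) /\
  (forall o a, ~~ (E o a && (cls a == i)) -> Y o a = 0) /\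
  (forall o, \sum_a Y o a <= y o) /\
  (forall a, \sum_(o : 'I_m) Y o a <= 1).

Definition msize (Y : 'I_m -> N -> R) : R := \sum_(o : 'I_m) \sum_a Y o a.

(* V_i^*(y): maximum size of such a fractional matching (the supremum,
   which is attained). *)
Definition Vstar (E : 'I_m -> N -> bool) (cls : N -> 'I_k) (i : 'I_k)
    (y : 'I_m -> R) : R :=
  sup [set msize Y | Y in [set Y | feasible_i E cls i y Y]].

End EFTT.

From HB Require Import structures.
From mathcomp Require Import all_boot all_order all_algebra.
From mathcomp Require Import all_classical all_reals all_analysis.
From mathcomp Require Import ring lra.
Set Implicit Arguments. Unset Strict Implicit. Unset Printing Implicit Defensive.
Import Order.TTheory GRing.Theory Num.Theory.
Local Open Scope ring_scope.

(* Primal-dual argument.  Let phi(t) = exp(min(t, gamma) - gamma), so that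
   phi(0) = e^-gamma, phi <= 1 and phi' <= phi.  Agent a of class i gets the dual
   value alpha_a = phi(final degree of a) - phi(0) >= 0, and each item o a price
   beta_o >= 0 such that, at the arrival of o,
   - phi(degree of a) + beta_o >= 1 afterwards, for every agent a of class i
     liking o, and
   - the mass received by class i pays for the increase of phi over class i
     plus beta_o per unit of mass received by class j.
   If some agent of class i liking o stays below gamma, class i is never capped
   in Phase I, so o is spread by Phase I alone, class i receives the common share
   s >= y_j(o) and is filled to a common level L; then beta_o = 1 - phi(L) works
   because phi' <= phi.  Otherwise beta_o = 0 works because phi <= 1.
   Telescoping phi over the arrivals bounds sum alpha + sum beta y_j by V_i,
   while alpha_a + beta_o >= 1 - e^-gamma on every edge of class i, so weak LP
   duality bounds (1 - e^-gamma) V_i^*(y_j) by V_i. *)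

Section Potential.
Variable R : realType.
Implicit Types g t u v d L : R.

Definition phi g t : R := expR (Num.min t g - g).

Lemma phi0 g : 0 <= g -> phi g 0 = expR (- g).
Proof. by move=> g0; rewrite /phi (min_l g0) sub0r. Qed.

Lemma phi_eq1 g t : g <= t -> phi g t = 1.
Proof. by move=> gt; rewrite /phi (min_r gt) subrr expR0. Qed.

Lemma phi_le1 g t : phi g t <= 1.
Proof. by rewrite /phi expR_le1 subr_le0 ge_min lexx orbT. Qed.

Lemma min_incr_bounds g {u v} : u <= v -> 0 <= Num.min v g - Num.min u g <= v - u.
Proof. by move=> uv; case: (leP v g); case: (leP u g) => *; apply/andP; split; lra. Qed.

Lemma le_phi g {u v} : u <= v -> phi g u <= phi g v.
Proof. by move=> /(min_incr_bounds g)/andP[? _]; rewrite ler_expR; lra. Qed.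

Lemma phi_incr_le g {u v} : u <= v -> phi g v - phi g u <= (v - u) * phi g v.
Proof.
move=> uv; have /andP[_ dmin] := min_incr_bounds g uv.
rewrite /phi; set a := Num.min u g - g; set b := Num.min v g - g.
have eab : expR a = expR b * expR (a - b) by rewrite -expRD; congr expR; ring.
have eb := expR_gt0 b.
have : expR b * (1 + (a - b)) <= expR a.
  by rewrite eab ler_wpM2l ?expR_ge1Dx // ltW.
have : expR b * (b - a) <= expR b * (v - u).
  by apply: ler_wpM2l; [exact: ltW | rewrite /a /b; lra].
nra.
Qed.

Lemma phi_incr_le_id g {u v} : u <= v -> phi g v - phi g u <= v - u.
Proof.
move=> uv; have := phi_incr_le g uv; have := phi_le1 g v.
have : 0 <= v - u by lra.
nra.
Qed.

Lemma phi_fill_ge g d L : phi g L <= phi g (d + Num.max 0 (L - d)).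
Proof. by apply: le_phi; rewrite -lerBlDl le_max lexx orbT. Qed.

Lemma phi_fill_incr g d L :
  phi g (d + Num.max 0 (L - d)) - phi g d <= phi g L * Num.max 0 (L - d).
Proof.
case: (leP (L - d) 0) => hL; first by rewrite addr0 subrr mulr0.
by rewrite subrKC mulrC phi_incr_le // -subr_ge0 ltW.
Qed.

End Potential.

Lemma ler_sum_eq (R : numDomainType) (I : finType) (P : pred I) (F G : I -> R) :
  (forall i, P i -> F i <= G i) -> \sum_(i | P i) F i = \sum_(i | P i) G i ->
  forall i, P i -> F i = G i.
Proof.
move=> FG eqFG i Pi; apply/eqP; rewrite eq_sym -subr_eq0; apply/eqP.
apply: (psumr_eq0P (F := fun i => G i - F i)) Pi => [j Pj|].
  by rewrite subr_ge0 FG.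
by rewrite sumrB eqFG subrr.
Qed.

Lemma sumr_restrict (R : nmodType) (I : finType) (P Q : pred I) (F : I -> R) :
  (forall i, P i -> ~~ Q i -> F i = 0) ->
  \sum_(i | P i) F i = \sum_(i | Q i && P i) F i.
Proof.
move=> FQ; rewrite (bigID Q) /= [X in _ + X]big1 ?addr0 => [|i /andP[]]; last exact: FQ.
by apply: eq_bigl => i; rewrite andbC.
Qed.

Section Waterfill.
Variables (R : realType) (N : finType).
Variables (S : pred N) (d : N -> R) (cap amt : R) (p : N -> R).
Hypothesis wf : waterfill S d cap amt p.

Lemma waterfill_ge0 a : 0 <= p a.
Proof. by case: wf => L [_ [-> _]]; case: (S a) => //; rewrite le_max lexx. Qed.

Lemma waterfill_out a : ~~ S a -> p a = 0.
Proof. by case: wf => L [_ [-> _]] /negbTE ->. Qed.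

End Waterfill.

Definition item_certificate (R : realType) (N : finType) (k : nat) (gamma : R)
    (likes : pred N) (cls : N -> 'I_k) (deg x : N -> R) (i j : 'I_k) (beta : R) :=
  [/\ 0 <= beta,
      forall a, likes a -> cls a = i -> 1 <= phi gamma (deg a + x a) + beta &
      \sum_(a | cls a == i) (phi gamma (deg a + x a) - phi gamma (deg a))
        + beta * \sum_(a | cls a == j) x a <= \sum_(a | cls a == i) x a].

Lemma certificate_saturated (R : realType) (N : finType) (k : nat) (gamma : R)
    (likes : pred N) (cls : N -> 'I_k) (deg x : N -> R) (i j : 'I_k) :
  (forall a, 0 <= x a) ->
  (forall a, likes a -> cls a = i -> gamma <= deg a + x a) ->
  item_certificate gamma likes cls deg x i j 0.
Proof.
move=> x_ge0 sat; split=> //.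
  by move=> a la ca; rewrite phi_eq1 ?addr0 ?sat.
rewrite mul0r addr0; apply: ler_sum => a _.
have := phi_incr_le_id gamma (ler_wpDr (x_ge0 a) (lexx (deg a))); lra.
Qed.

Section ItemStep.
Variables (R : realType) (N : finType) (k : nat).
Variables (gamma : R) (likes : pred N) (cls : N -> 'I_k) (deg x : N -> R).
Variables (q : 'I_k -> R) (s : R) (pc : 'I_k -> N -> R) (p2 : N -> R).
Hypothesis q_def : forall i, q i = Num.min (class_cap gamma likes cls deg i) s.
Hypothesis sum_q : \sum_i q i = Num.min 1 (\sum_i class_cap gamma likes cls deg i).
Hypothesis phase1 :
  forall i, waterfill [pred a | likes a && (cls a == i)] deg gamma (q i) (pc i).
Hypothesis phase2 : waterfill likes (fun a => deg a + pc (cls a) a) 1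
  (Num.min (1 - \sum_i q i) (\sum_(a | likes a) (1 - (deg a + pc (cls a) a)))) p2.
Hypothesis x_def : forall a, x a = pc (cls a) a + p2 a.

Lemma item_ge0 a : 0 <= x a.
Proof. by rewrite x_def addr_ge0 // (waterfill_ge0 (phase1 _), waterfill_ge0 phase2). Qed.

Lemma phase2_idle : \sum_i q i = 1 -> forall a, p2 a = 0.
Proof.
move=> q1 a; case: (boolP (likes a)) => la; last exact: waterfill_out phase2 _ la.
apply: (psumr_eq0P (fun a _ => waterfill_ge0 phase2 a) _ la).
apply/le_anti/andP; split.
  by case: phase2 => L [_ [_ ->]]; rewrite q1 subrr ge_min lexx.
exact: sumr_ge0 (fun a _ => waterfill_ge0 phase2 a).
Qed.

Lemma class_mass : (forall a, p2 a = 0) -> forall j, \sum_(a | cls a == j) x a = q j.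
Proof.
move=> p2_0 j; case: (phase1 j) => L [_ [_ <-]].
rewrite (sumr_restrict (Q := likes)) => [|a /eqP ca la]; last first.
  by rewrite x_def p2_0 addr0 ca (waterfill_out (phase1 j)) //= (negbTE la).
by apply: eq_bigr => a /andP[_ /eqP ca]; rewrite x_def p2_0 addr0 ca.
Qed.

Variables (i : 'I_k) (a0 : N).
Hypotheses (likes_a0 : likes a0) (cls_a0 : cls a0 = i).
Hypothesis a0_below : deg a0 + x a0 < gamma.

Lemma share_neq_cap : q i != class_cap gamma likes cls deg i.
Proof.
apply/eqP => q_cap; case: (phase1 i) => L [L_le [pcE pc_sum]].
have pc_le a : likes a && (cls a == i) -> pc i a <= Num.max 0 (gamma - deg a).
  by move=> Sa; rewrite pcE /= Sa le_max2 // lerB.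
have := ler_sum_eq pc_le; rewrite pc_sum q_cap => /(_ erefl a0).
rewrite likes_a0 cls_a0 eqxx => /(_ isT) pc_a0.
have : gamma - deg a0 <= pc i a0 by rewrite pc_a0 le_max lexx orbT.
have := x_def a0; have := waterfill_ge0 phase2 a0; rewrite cls_a0 => p2_ge0 x_a0 pc_ge.
by apply/negP: a0_below; rewrite -leNgt; lra.
Qed.

Lemma unsaturated_share : q i = s.
Proof. by move: share_neq_cap; rewrite q_def; case: leP => // _; rewrite eqxx. Qed.

Lemma unsaturated_total : \sum_i q i = 1.
Proof.
move: sum_q; case: leP => // _ sum_q_cap; case/eqP: share_neq_cap.
by apply: ler_sum_eq sum_q_cap _ _ => // i' _; rewrite q_def ge_min lexx.
Qed.

Lemma certificate_unsaturated j :
  exists beta, item_certificate gamma likes cls deg x i j beta.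
Proof.
case: (phase1 i) => L [_ [pcE _]].
have p2_0 := phase2_idle unsaturated_total.
have x_cls a : cls a = i -> x a = if likes a then Num.max 0 (L - deg a) else 0.
  by move=> ca; rewrite x_def p2_0 addr0 ca pcE /= ca eqxx andbT.
exists (1 - phi gamma L); split.
- by rewrite subr_ge0 phi_le1.
- by move=> a la ca; rewrite x_cls // la; have := phi_fill_ge gamma (deg a) L; lra.
have gain : \sum_(a | cls a == i) (phi gamma (deg a + x a) - phi gamma (deg a))
    <= phi gamma L * s.
  rewrite -unsaturated_share -(class_mass p2_0 i) mulr_sumr.
  apply: ler_sum => a /eqP ca; rewrite x_cls //.
  by case: (likes a); [exact: phi_fill_incr | rewrite addr0 subrr mulr0].
have qj : q j <= s by rewrite q_def ge_min lexx orbT.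
have := phi_le1 gamma L; rewrite !class_mass // unsaturated_share; nra.
Qed.

End ItemStep.

Lemma eftt_item_ge0 (R : realType) (N : finType) (k : nat) (gamma : R)
    (likes : pred N) (cls : N -> 'I_k) (deg x : N -> R) :
  eftt_item gamma likes cls deg x -> forall a, 0 <= x a.
Proof. by case=> q [s [pc [p2 [_ [_ [_ [ph1 [ph2 xE]]]]]]]]; exact: item_ge0 ph1 ph2 xE. Qed.

Lemma eftt_item_certificate (R : realType) (N : finType) (k : nat) (gamma : R)
    (likes : pred N) (cls : N -> 'I_k) (deg x : N -> R) (i j : 'I_k) :
  eftt_item gamma likes cls deg x ->
  exists beta, item_certificate gamma likes cls deg x i j beta.
Proof.
move=> step; have x_ge0 := eftt_item_ge0 step.
case: step => q [s [pc [p2 [_ [qE [qsum [ph1 [ph2 xE]]]]]]]].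
case: (boolP [exists a, [&& likes a, cls a == i & deg a + x a < gamma]]).
  case/existsP=> a /and3P[la /eqP ca below].
  exact: certificate_unsaturated qE qsum ph1 ph2 xE _ _ la ca below j.
rewrite negb_exists => /forallP saturated.
exists 0; apply: certificate_saturated => // a la ca.
by move: (saturated a); rewrite la ca eqxx /= -leNgt.
Qed.

Section Duality.
Variables (R : realType) (N : finType) (m k : nat).
Variables (E : 'I_m -> N -> bool) (cls : N -> 'I_k) (i : 'I_k) (y : 'I_m -> R).

Lemma weak_duality (alpha : N -> R) (beta : 'I_m -> R) (c : R) (Y : 'I_m -> N -> R) :
  (forall a, 0 <= alpha a) -> (forall o, 0 <= beta o) ->
  (forall o a, E o a -> cls a = i -> c <= alpha a + beta o) ->
  feasible_i E cls i y Y ->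
  c * msize Y <= \sum_(a | cls a == i) alpha a + \sum_o beta o * y o.
Proof.
move=> alpha0 beta0 cover [Y0 [Y_supp [Y_item Y_agent]]].
have covered : c * msize Y <= \sum_o \sum_a Y o a * (alpha a + beta o).
  rewrite /msize mulr_sumr; apply: ler_sum => o _; rewrite mulr_sumr.
  apply: ler_sum => a _; case: (boolP (E o a && (cls a == i))) => [/andP[Eoa /eqP ca]|off].
    by rewrite mulrC ler_wpM2l // cover.
  by rewrite Y_supp // mulr0 mul0r.
have agents : \sum_o \sum_a Y o a * alpha a <= \sum_(a | cls a == i) alpha a.
  rewrite exchange_big /= [X in _ <= X]big_mkcond /=; apply: ler_sum => a _.
  case: (boolP (cls a == i)) => ca.
    by rewrite -mulr_suml -[X in _ <= X]mul1r ler_wpM2r.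
  by rewrite big1 // => o _; rewrite Y_supp ?mul0r // negb_and ca orbT.
have items : \sum_o beta o * \sum_a Y o a <= \sum_o beta o * y o.
  by apply: ler_sum => o _; rewrite ler_wpM2l.
apply: le_trans covered (le_trans _ (lerD agents items)).
rewrite -big_split /=; apply: ler_sum => o _; rewrite mulr_sumr -big_split /=.
by apply: ler_sum => a _; rewrite mulrDr [beta o * _]mulrC.
Qed.

Lemma Vstar_scaled_le (c B : R) :
  0 <= c -> 0 <= B -> (forall o, 0 <= y o) ->
  (forall Y, feasible_i E cls i y Y -> c * msize Y <= B) ->
  c * Vstar E cls i y <= B.
Proof.
move=> c0 B0 y0 bound; have [-> | c_gt0] := eqVneq c 0; first by rewrite mul0r.
have {c_gt0} c_gt0 : 0 < c by rewrite lt_def c_gt0.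
rewrite mulrC -ler_pdivlMr //; apply: ge_sup.
  pose Y0 : 'I_m -> N -> R := fun _ _ => 0.
  exists (msize Y0), Y0 => //; split=> //; split=> //.
  by split=> *; rewrite big1.
by move=> _ [Y fY <-]; rewrite ler_pdivlMr // mulrC bound.
Qed.

End Duality.

Section Degrees.
Variables (R : realType) (N : finType) (m : nat) (X : 'I_m -> N -> R).

Definition deg_upto (t : nat) (a : N) : R := \sum_(o : 'I_m | (o < t)%N) X o a.

Lemma deg_upto_succ (o : 'I_m) a : deg_upto o.+1 a = deg_before X o a + X o a.
Proof.
rewrite /deg_upto (bigD1 o) ?ltnSn //= addrC; congr (_ + _).
by apply: eq_bigl => o'; rewrite ltnS ltn_neqAle andbC.
Qed.

Lemma phi_total_telescope g a :
  phi g (\sum_o X o a) - phi g 0 =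
  \sum_o (phi g (deg_before X o a + X o a) - phi g (deg_before X o a)).
Proof.
have := telescope_sumr (fun t => phi g (deg_upto t a)) (leq0n m).
have -> : deg_upto 0 a = 0 by rewrite /deg_upto big_pred0.
have -> : deg_upto m a = \sum_o X o a by apply: eq_bigl => o; rewrite ltn_ord.
by rewrite big_mkord => <-; apply: eq_bigr => o _; rewrite deg_upto_succ.
Qed.

Lemma deg_after_le_total (o : 'I_m) a :
  (forall o', 0 <= X o' a) -> deg_before X o a + X o a <= \sum_o' X o' a.
Proof.
move=> X0; rewrite -deg_upto_succ [X in _ <= X](bigID (fun o' : 'I_m => (o' < o.+1)%N)) /=.
by rewrite lerDl sumr_ge0.
Qed.

End Degrees.

Section Certificates.
Variables (R : realType) (N : finType) (m k : nat).
Variables (E : 'I_m -> N -> bool) (cls : N -> 'I_k) (gamma : R) (X : 'I_m -> N -> R).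
Variables (i j : 'I_k) (beta : 'I_m -> R).
Hypothesis X_ge0 : forall o a, 0 <= X o a.
Hypothesis cert :
  forall o, item_certificate gamma (E o) cls (deg_before X o) (X o) i j (beta o).

Definition agent_dual (a : N) : R := phi gamma (\sum_o X o a) - phi gamma 0.

Lemma agent_dual_ge0 a : 0 <= agent_dual a.
Proof. by rewrite subr_ge0 le_phi ?sumr_ge0. Qed.

Lemma agent_dual_cover o a : 0 <= gamma -> E o a -> cls a = i ->
  1 - expR (- gamma) <= agent_dual a + beta o.
Proof.
move=> gamma_ge0 Eoa ca; case: (cert o) => _ /(_ a Eoa ca) reach _.
have := le_phi gamma (deg_after_le_total o (X_ge0^~ a)).
by rewrite /agent_dual phi0 //; lra.
Qed.

Lemma dual_objective_le_V :
  \sum_(a | cls a == i) agent_dual a + \sum_o beta o * yv cls X j o <= V cls X i.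
Proof.
rewrite /agent_dual; under eq_bigr do rewrite phi_total_telescope.
rewrite exchange_big -big_split /V exchange_big /=.
by apply: ler_sum => o _; case: (cert o).
Qed.

End Certificates.

Theorem lemma2 (R : realType) (N : finType) (m k : nat)
    (E : 'I_m -> N -> bool) (cls : N -> 'I_k) (gamma : R)
    (X : 'I_m -> N -> R) :
  0 <= gamma <= 1 ->
  eftt_output gamma E cls X ->
  forall i j : 'I_k,
    (1 - expR (- gamma)) * Vstar E cls i (yv cls X j) <= V cls X i.
Proof.
move=> /andP[gamma_ge0 _] HX i j.
have X_ge0 o : forall a, 0 <= X o a := eftt_item_ge0 (HX o).
have [beta cert] := choice (fun o => eftt_item_certificate i j (HX o)).
have beta_ge0 o : 0 <= beta o by case: (cert o).
apply: Vstar_scaled_le => [|||Y feasible].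
- by rewrite subr_ge0 expR_le1 oppr_le0.
- by apply: sumr_ge0 => a _; apply: sumr_ge0.
- by move=> o; apply: sumr_ge0.
apply: (le_trans _ (dual_objective_le_V cert)).
apply: weak_duality feasible => // [a|o a Eoa ca].
  exact: agent_dual_ge0.
exact: agent_dual_cover.
Qed.
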